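(* Let $q=p^m$ with $p$ an odd prime and $m\ge1$, and for $b\in\mathbb{F}_{q^2}$ let $\delta(b)=\#\{u\in\mathbb{F}_{q^2}:\ 2u^{q+1}+u^2=b\}$. Then $\delta(0)=q$ if $p=3$, and $\delta(0)=1$ otherwise.
   Context: $\delta(b)$ equals $\delta_f(1,b+\tfrac14)$ for $f(x)=x^{q+2}$, where $\delta_f(a,b)=\#\{x\in\mathbb{F}_{q^2}: f(x+a)-f(x)=b\}$. *)

From mathcomp Require Import all_boot all_algebra all_field.
Set Implicit Arguments. Unset Strict Implicit. Unset Printing Implicit Defensive.
Import GRing.Theory.
Local Open Scope ring_scope.

Definition delta {F : finFieldType} (q : nat) (b : F) : nat :=
  #|[set u : F | 2 * u ^+ q.+1 + u ^+ 2 == b]|.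

(* Since #|F| = q^2, the map x |-> x^q is an additive involution of F.  If
   2 u^(q+1) + u^2 = 0 with u != 0, then u = -2 u^q; applying the involution
   gives u^q = -2 u, whence u = 4 u and 3 u = 0, impossible unless the
   characteristic is 3.  In characteristic 3 we have 2 = -1, and the equation
   reads u (u - u^q) = 0, whose solutions are the q fixed points of x |-> x^q:
   at most q as roots of X^q - X, and at least q because the trace
   u |-> u + u^q maps F into the fixed points with fibres of size at most q. *)

From mathcomp Require Import all_boot all_algebra all_field.
From mathcomp Require Import ring.

Set Implicit Arguments.
Unset Strict Implicit.
Unset Printing Implicit Defensive.

Import GRing.Theory.
Local Open Scope ring_scope.

Lemma card_roots_Xn_add (R : finIdomainType) (n : nat) (P : {poly R}) (A : {set R}) :
  (size P <= n)%N -> (forall x, x \in A -> x ^+ n + P.[x] = 0) -> (#|A| <= n)%N.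
Proof.
move=> szP rootA; have szXnP : size ('X^n + P) = n.+1.
  by rewrite size_polyDl size_polyXn.
rewrite -ltnS -szXnP cardE max_poly_roots ?enum_uniq //.
  by rewrite -size_poly_gt0 szXnP.
by apply/allP => x; rewrite mem_enum => /rootA; rewrite /root !hornerE => ->.
Qed.

Section QuadraticExtensionFrobenius.

Variables (F : finFieldType) (q : nat).
Hypotheses (pcharF_q : [pchar F].-nat q) (card_F : #|F| = (q ^ 2)%N).

Lemma exprqD (x y : F) : (x + y) ^+ q = x ^+ q + y ^+ q.
Proof. exact: exprDn_pchar. Qed.

Lemma exprqK (x : F) : (x ^+ q) ^+ q = x.
Proof. by rewrite -exprM mulnn -card_F expf_card. Qed.

Lemma q_gt1 : (1 < q)%N.
Proof. by move: (card_finNzRing_gt1 F); rewrite card_F; case: q => [|[]]. Qed.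

Lemma card_fixed_exprq : #|[set u : F | u ^+ q == u]| = q.
Proof.
set K := [set u | _].
have szq (P : {poly F}) : (size P <= 2)%N -> (size P <= q)%N.
  by move=> /leq_trans; apply; apply: q_gt1.
apply/eqP; rewrite eqn_leq; apply/andP; split.
  apply: (@card_roots_Xn_add _ _ (- 'X)); first by rewrite szq ?size_polyN ?size_polyX.
  by move=> u; rewrite inE !hornerE => /eqP ->; rewrite subrr.
have trace_fixed u : u + u ^+ q \in K by rewrite inE exprqD exprqK addrC.
have fibre_le (v : F) : (#|[set u : F | (u + u ^+ q == v)%R]| <= q)%N.
  apply: (@card_roots_Xn_add _ _ ('X - v%:P)); first by rewrite szq ?size_XsubC.
  move=> u; rewrite inE hornerD hornerN hornerX hornerC => /eqP <-.
  by rewrite addrA [u ^+ q + u]addrC subrr.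
rewrite -(leq_pmul2r (ltnW q_gt1)) mulnn -card_F -[#|F|]sum1_card -sum_nat_const.
rewrite (partition_big (fun u => u + u ^+ q) (mem K) (fun u _ => trace_fixed u)) /=.
apply: leq_sum => v _; rewrite sum1_card.
by apply: leq_trans (fibre_le v); apply: subset_leq_card; apply/subsetP => u; rewrite !inE.
Qed.

Lemma delta0_pchar3 : 3%N \in [pchar F] -> delta q (0 : F) = q.
Proof.
move=> pcharF3; rewrite /delta -[RHS]card_fixed_exprq; apply: eq_card => u; rewrite !inE.
have two_eq : (2 : F) = -1 by apply/eqP; rewrite -subr_eq0 opprK -mulrSr (pcharf0 pcharF3).
have -> : 2 * u ^+ q.+1 + u ^+ 2 = u * (u - u ^+ q) by rewrite two_eq exprS expr2; ring.
rewrite (@mulf_eq0 F) subr_eq0 eq_sym.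
by have [->|//] := eqVneq u 0; rewrite expf_eq0 eqxx andbT (ltnW q_gt1).
Qed.

Lemma delta0_pchar_neq3 : (3%:R : F) != 0 -> delta q (0 : F) = 1%N.
Proof.
move=> nz3; rewrite /delta -[RHS](cards1 (0 : F)); apply: eq_card => u.
rewrite !inE; have [->|u_nz] := eqVneq u 0; first by rewrite !exprS !mul0r mulr0 addr0 !eqxx.
apply/negbTE/eqP => eq0; set b := u ^+ q.
have two_b : 2 * b = - u.
  have : u * (2 * b + u) = 0 by rewrite -eq0 /b exprS expr2; ring.
  by move/eqP; rewrite mulf_eq0 (negbTE u_nz) addr_eq0 => /eqP.
have two_u : 2 * u = - b.
  have := congr1 (fun x => x ^+ q) two_b.
  by rewrite /= exprMn exprqK exprNn_pchar // -[2]/(1 + 1 : F) exprqD expr1n.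
have : 3%:R * b = 0.
  have -> : 3%:R * b = - (2 * - (2 * b)) - b by ring.
  by rewrite two_b opprK two_u opprK subrr.
by apply/eqP; rewrite mulf_eq0 negb_or nz3 expf_neq0.
Qed.

End QuadraticExtensionFrobenius.

Theorem proposition3 (p m : nat) (F : finFieldType) :
  prime p -> odd p -> (0 < m)%N -> p \in [pchar F] -> #|F| = ((p ^ m) ^ 2)%N ->
  delta (p ^ m) (0 : F) = (if (p == 3)%N then (p ^ m)%N else 1%N).
Proof.
move=> p_pr _ _ pcharFp card_F.
have pcharF_q : [pchar F].-nat (p ^ m)%N by rewrite (eq_pnat _ (pcharf_eq pcharFp)) pnatX pnat_id.
case: eqP => [p3 | /eqP p_neq3].
  by apply: (delta0_pchar3 pcharF_q card_F); rewrite -p3.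
apply: (delta0_pchar_neq3 pcharF_q card_F).
by rewrite -(dvdn_pcharf pcharFp) dvdn_prime2 ?(negbTE p_neq3).
Qed.
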